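(* Let $\mathcal{X}$ be an infinite instance domain, $l\ge0$ an integer, and $\mathcal{C}^l$ the class of unions of at most $l$ singletons. Then for every integer $k\ge0$, \[ \mathrm{ELdim}(\mathcal{C}^l,k)=\sup\Big\{t:\binom{t}{\le k+1}\le\binom{t}{\le l}\Big\}=\begin{cases}\infty,& k\le l-1,\\ l,& k\ge l.\end{cases} \]
   Context: $\mathcal{C}^l$ is the class of functions $\mathcal{X}\to\{-1,+1\}$ of the form $x\mapsto1-2I(x\in D)$ with $D\subseteq\mathcal{X}$, $|D|\le l$. $\binom{t}{\le j}=\sum_{i=0}^{j}\binom{t}{i}$. Extended mistake tree w.r.t. a class $\mathcal{H}$: a finite full binary tree (possibly a single leaf) in which each internal node $v$ is labeled by $x_v\in\mathcal{X}$ and has two solid downward edges, to its left child (label $-1$) and right child (label $+1$), plus one dashed downward edge to one of its two children; each leaf is labeled by some $h\in\mathcal{H}$ with $h(x_v)$ equal to the direction label at every internal node $v$ on the root-to-leaf path. A root-to-leaf path chooses at each internal node one downward edge; its length is its number of edges. The tree is $(k,m)$-difficult if every root-to-leaf path using at most $k$ solid edges has length at least $m$. $\mathrm{ELdim}(\mathcal{H},k)$ is the supremum of $m$ such that a $(k,m)$-difficult extended mistake tree w.r.t. $\mathcal{H}$ exists. *)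

(* Labels -1/+1 are encoded as bool: false = -1, true = +1. *)
From Stdlib Require List.
From mathcomp Require Import all_boot.
Set Implicit Arguments. Unset Strict Implicit. Unset Printing Implicit Defensive.

Definition binom_le (t j : nat) : nat := \sum_(i < j.+1) 'C(t, i).

(* C^l : functions x |-> 1 - 2 I(x in D) with |D| <= l, i.e. h x = -1 iff x in D *)
Definition Cl (X : Type) (l : nat) (h : X -> bool) : Prop :=
  exists D : list X, size D <= l /\ (forall x, h x = false <-> List.In x D).

(* Extended mistake tree: a leaf labelled by a hypothesis, or an internal node
   labelled by x, with a flag telling to which child the dashed edge goes
   (false = left child (label -1), true = right child (label +1)). *)
Inductive emtree (X : Type) : Type :=
| Leaf of (X -> bool)
| Node of X & bool & emtree X & emtree X.
Arguments Leaf {X}.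
Arguments Node {X}.

(* well-formedness w.r.t. a class H: every leaf hypothesis is in H and agrees
   with the direction labels on its root-to-leaf path (acc accumulates the
   (x_v, label) constraints of the ancestors). *)
Fixpoint em_valid_acc (X : Type) (H : (X -> bool) -> Prop)
    (acc : list (X * bool)) (t : emtree X) : Prop :=
  match t with
  | Leaf h => H h /\ (forall p, List.In p acc -> h p.1 = p.2)
  | Node x _ tl tr => em_valid_acc H ((x, false) :: acc) tl /\
                      em_valid_acc H ((x, true) :: acc) tr
  end.

Definition em_valid (X : Type) (H : (X -> bool) -> Prop) (t : emtree X) : Prop :=
  em_valid_acc H nil t.

Inductive edge := SolidL | SolidR | Dashed.

Definition is_solid (e : edge) : bool :=
  match e with Dashed => false | _ => true end.

Fixpoint root_leaf_path (X : Type) (t : emtree X) (s : seq edge) : bool :=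
  match t, s with
  | Leaf _, [::] => true
  | Node _ d tl tr, e :: s' =>
      match e with
      | SolidL => root_leaf_path tl s'
      | SolidR => root_leaf_path tr s'
      | Dashed => root_leaf_path (if d then tr else tl) s'
      end
  | _, _ => false
  end.

Definition difficult (X : Type) (k m : nat) (t : emtree X) : Prop :=
  forall s, root_leaf_path t s -> count is_solid s <= k -> m <= size s.

(* supremum in nat U {oo} of a set of naturals; None stands for oo *)
Definition is_sup (S : nat -> Prop) (d : option nat) : Prop :=
  match d with
  | None => forall n, exists m, S m /\ n < m
  | Some n => (forall m, S m -> m <= n) /\
              (forall n', (forall m, S m -> m <= n') -> n <= n')
  end.

Definition ELdim_set (X : Type) (H : (X -> bool) -> Prop) (k : nat) (m : nat) : Prop :=
  exists t : emtree X, em_valid H t /\ difficult k m t.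

Definition ELdim_is (X : Type) (H : (X -> bool) -> Prop) (k : nat) (d : option nat) : Prop :=
  is_sup (ELdim_set H k) d.

From Stdlib Require List.
From Stdlib Require Import ClassicalEpsilon.
From mathcomp Require Import all_boot.
From mathcomp Require Import zify.
Set Implicit Arguments. Unset Strict Implicit. Unset Printing Implicit Defensive.

(* Lower bound: along distinct points x_1, x_2, ... put a node at x_i whose
   dashed edge predicts +1; the adversary answers -1 (moving left, adding x_i
   to the negative set) at most l times.  A path with at most k < l solid edges
   never exhausts that budget, so it runs through all the points; for k >= l,
   l points already give a (k, l)-difficult tree.
   Upper bound for k >= l: the all-left path is labelled -1 at distinct points,
   all negative for its leaf hypothesis, so it has length at most l <= k;
   it uses only solid edges, hence no tree is (k, l+1)-difficult.
   On the binomial side, binom(t, <= j) is nondecreasing in j, strictly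
   increasing for j <= t and constant from j = t on. *)

Section NegativeSetHypotheses.

Variable X : Type.

(* [X] has no decidable equality, so membership in [D] is decided classically. *)
Definition neg_on (D : list X) (x : X) : bool :=
  if excluded_middle_informative (List.In x D) then false else true.

Lemma neg_on_false D x : neg_on D x = false <-> List.In x D.
Proof. by rewrite /neg_on; case: excluded_middle_informative. Qed.

Lemma Cl_neg_on l D : size D <= l -> Cl l (neg_on D).
Proof. by move=> szD; exists D; split=> // x; apply: neg_on_false. Qed.

End NegativeSetHypotheses.

Lemma exists_NoDup_of_size X :
  (forall s : list X, exists x : X, ~ List.In x s) ->
  forall n, exists ps : list X, List.NoDup ps /\ size ps = n.
Proof.
move=> Xinf; elim=> [|n [ps [ndps szps]]].
  by exists nil; split=> //; apply: List.NoDup_nil.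
have [x xNps] := Xinf ps.
by exists (x :: ps); split; [apply: List.NoDup_cons | rewrite /= szps].
Qed.

Section AdversaryTree.

Variable X : Type.

(* [c] is the remaining number of -1 answers, [D] the points answered -1. *)
Fixpoint adv_tree (c : nat) (ps D : list X) : emtree X :=
  match ps, c with
  | x :: ps', c'.+1 => Node x true (adv_tree c' ps' (x :: D)) (adv_tree c ps' D)
  | _, _ => Leaf (neg_on D)
  end.

Lemma adv_tree_valid_acc l ps : forall c D acc,
  List.NoDup ps -> (forall y, List.In y ps -> ~ List.In y D) ->
  (forall p, List.In p acc -> ~ List.In p.1 ps /\ (List.In p.1 D <-> p.2 = false)) ->
  size D + c <= l -> em_valid_acc (Cl l) acc (adv_tree c ps D).
Proof.
have leaf_ok D acc : size D <= l ->
    (forall p, List.In p acc -> List.In p.1 D <-> p.2 = false) ->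
    em_valid_acc (Cl l) acc (Leaf (neg_on D)).
  move=> szD accD; split; first exact: Cl_neg_on.
  move=> [y b] /accD /= yD.
  case: b yD => yD; last exact/neg_on_false/yD.
  by case E: (neg_on D y) => //; move/neg_on_false/yD: E.
elim: ps => [|x ps IH] [|c] D acc ndps psD accP szD /=;
  try (apply: leaf_ok => [|p /accP []//]; lia).
case/List.NoDup_cons_iff: ndps => xNps ndps.
split; apply: IH => //.
- by move=> y yps /= [yx | yD]; [subst y | apply: (psD y (or_intror yps))].
- move=> p /= [<- | pacc] /=; first by split=> //; split=> // _; left.
  have [pNps pD] := accP p pacc; split; first by move=> pps; apply: pNps; right.
  by rewrite -pD; split=> [[px|] //|]; [case: pNps; left | right].
- by rewrite /=; lia.
- by move=> y yps; apply: psD; right.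
- move=> p /= [<- | pacc] /=; first by split=> //; split=> // /(psD x (or_introl erefl)).
  by have [pNps pD] := accP p pacc; split=> // pps; apply: pNps; right.
Qed.

Lemma adv_tree_valid l ps : List.NoDup ps -> em_valid (Cl l) (adv_tree l ps nil).
Proof. by move=> ndps; apply: adv_tree_valid_acc => // y _ []. Qed.

Lemma adv_tree_path ps : forall c D s, root_leaf_path (adv_tree c ps D) s ->
  size s = size ps \/ c <= count is_solid s.
Proof.
elim: ps => [|x ps IH] [|c] D [|e s] //=; try by [left | right].
by case: e => /IH [-> | csol] /=; by [left | right; lia].
Qed.

End AdversaryTree.

Lemma ELdim_set_Cl X (Xinf : forall s : list X, exists x : X, ~ List.In x s) l k n :
  (k < l) || (n <= l) -> ELdim_set (Cl (X:=X) l) k n.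
Proof.
move=> kln; have [ps [ndps szps]] := exists_NoDup_of_size Xinf n.
exists (adv_tree l ps nil); split; first exact: adv_tree_valid.
move=> s /adv_tree_path [-> | lsol] solk; first by rewrite szps.
by have := count_size is_solid s; lia.
Qed.

Section LeftmostPath.

Variables (X : Type) (H : (X -> bool) -> Prop).

Fixpoint left_labels (t : emtree X) : list X :=
  if t is Node x _ tl _ then x :: left_labels tl else nil.

Lemma root_leaf_path_left t : root_leaf_path t (nseq (size (left_labels t)) SolidL).
Proof. by elim: t => //= x b tl IHl tr _. Qed.

Lemma em_valid_acc_consistent acc t : em_valid_acc H acc t ->
  exists h : X -> bool, forall p, List.In p acc -> h p.1 = p.2.
Proof.
elim: t acc => [h|x b tl IHl tr _] acc /=; first by case=> _ hacc; exists h.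
by case=> /IHl [h hacc] _; exists h => p pacc; apply: hacc; right.
Qed.

Lemma em_valid_acc_node_fresh acc x b tl tr :
  em_valid_acc H acc (Node x b tl tr) -> forall b', ~ List.In (x, b') acc.
Proof.
case=> /em_valid_acc_consistent [hl hlacc] /em_valid_acc_consistent [hr hracc].
case=> xacc.
- by have := hlacc _ (or_introl erefl); rewrite (hlacc _ (or_intror xacc)).
- by have := hracc _ (or_introl erefl); rewrite (hracc _ (or_intror xacc)).
Qed.

Lemma left_labels_NoDup acc t : em_valid_acc H acc t ->
  List.NoDup (left_labels t) /\
  forall y, List.In y (left_labels t) -> ~ List.In (y, false) acc.
Proof.
elim: t acc => [h|x b tl IHl tr _] acc /=.
  by move=> _; split=> //; apply: List.NoDup_nil.
move=> vt; have xfresh := em_valid_acc_node_fresh vt.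
have [ndl lfresh] := IHl _ vt.1.
split; first by apply: List.NoDup_cons => // /lfresh; apply; left.
move=> y [<- | yl]; first exact: xfresh.
by move=> yacc; apply: (lfresh y yl); right.
Qed.

Lemma left_labels_leaf acc t : em_valid_acc H acc t -> exists h, H h /\
  (forall p, List.In p acc -> h p.1 = p.2) /\
  forall y, List.In y (left_labels t) -> h y = false.
Proof.
elim: t acc => [h|x b tl IHl tr _] acc /=; first by case=> Hh hacc; exists h.
case=> /IHl [h [Hh [hacc hl]]] _; exists h; split=> //.
split=> [p pacc | y]; first by apply: hacc; right.
by case=> [<- | /hl //]; apply: (hacc (x, false)); left.
Qed.

End LeftmostPath.

Lemma ELdim_set_Cl_le X l k m : l <= k -> ELdim_set (Cl (X:=X) l) k m -> m <= l.
Proof.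
move=> lk [t [vt dt]].
have [h [[D [szD hD]] [_ hl]]] := left_labels_leaf vt.
have [ndl _] := left_labels_NoDup vt.
have szl : size (left_labels t) <= l.
  have incl_D : List.incl (left_labels t) D by move=> y /hl /hD.
  by apply: leq_trans szD; apply/leP/List.NoDup_incl_length.
have := dt _ (root_leaf_path_left t); rewrite size_nseq count_nseq /=; lia.
Qed.

Lemma binom_leS t j : binom_le t j.+1 = binom_le t j + 'C(t, j.+1).
Proof. by rewrite /binom_le big_ord_recr. Qed.

Lemma leq_binom_le t j1 j2 : j1 <= j2 -> binom_le t j1 <= binom_le t j2.
Proof.
elim: j2 => [|j IH]; first by rewrite leqn0 => /eqP ->.
rewrite leq_eqVlt ltnS => /predU1P [-> // | j1j].
by rewrite binom_leS; apply: leq_trans (IH j1j) (leq_addr _ _).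
Qed.

Lemma ltn_binom_leS t j : j < t -> binom_le t j < binom_le t j.+1.
Proof. by move=> jt; rewrite binom_leS -{1}(addn0 (binom_le t j)) ltn_add2l bin_gt0. Qed.

Lemma binom_le_id t j : t <= j -> binom_le t j = binom_le t t.
Proof.
elim: j => [|j IH]; first by rewrite leqn0 => /eqP ->.
rewrite leq_eqVlt ltnS => /predU1P [-> // | tj].
by rewrite binom_leS IH // bin_small ?addn0.
Qed.

Lemma binom_le_bound t l k :
  l <= k -> binom_le t k.+1 <= binom_le t l -> t <= l.
Proof.
move=> lk; apply: contraTT; rewrite -!ltnNge => lt.
by apply: leq_trans (ltn_binom_leS lt) _; apply: leq_binom_le.
Qed.

Lemma is_sup_max (S : nat -> Prop) n :
  S n -> (forall m, S m -> m <= n) -> is_sup S (Some n).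
Proof. by move=> Sn Sle; split=> // n' /(_ n Sn). Qed.

Theorem mainTheorem10 (X : Type)
  (X_infinite : forall s : list X, exists x : X, ~ List.In x s)
  (l k : nat) :
  let d := if k < l then None else Some l in
  ELdim_is (Cl (X:=X) l) k d /\
  is_sup (fun t => binom_le t k.+1 <= binom_le t l) d.
Proof.
rewrite /ELdim_is; case: ltnP => [kl | lk]; split.
- by move=> n; exists n.+1; split; [apply: (ELdim_set_Cl X_infinite); rewrite kl|].
- by move=> n; exists n.+1; split; [apply: leq_binom_le|].
- apply: is_sup_max; first by apply: (ELdim_set_Cl X_infinite); rewrite leqnn orbT.
  by move=> m; apply: ELdim_set_Cl_le.
- apply: is_sup_max => [|t]; first by rewrite binom_le_id ?leqW.
  exact: binom_le_bound.
Qed.
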